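(* Let $A=\sigma(R)\langle x_1,\dots,x_n\rangle$ be a quasi-commutative bijective $\sigma$-PBW extension of a left Noetherian ring $R$. Let $c_1,\dots,c_t\in R\setminus\{0\}$ and let $\mathbf X_1,\dots,\mathbf X_t$ be monomials of $A^m$. Let $L=[c_1\mathbf X_1\ \cdots\ c_t\mathbf X_t]$ and $$\mathrm{Syz}(L)=\{(h_1,\dots,h_t)^T\in A^t:\sum_jh_jc_j\mathbf X_j=\mathbf 0\}.$$ Put $\beta_j=\exp(\mathbf X_j)$. For each nonempty $J\subseteq\{1,\dots,t\}$ that is saturated with respect to $\{\mathbf X_1,\dots,\mathbf X_t\}$ and satisfies $\mathbf X_J\neq\mathbf 0$: - let $\gamma_j\in\mathbb N^n$ ($j\in J$) be defined by $\gamma_j+\beta_j=\exp(\mathbf X_J)$; - let $B^J=\{\mathbf b^J_1,\dots,\mathbf b^J_{r_J}\}$, with $\mathbf b^J_v=(b^J_{vj})_{j\in J}$, be a finite generating set of the left $R$-module $$\mathrm{Syz}_R[\sigma^{\gamma_j}(c_j)c_{\gamma_j,\beta_j}\mid j\in J]=\Big\{(b_j)_{j\in J}\in R^J:\sum_{j\in J}b_j\sigma^{\gamma_j}(c_j)c_{\gamma_j,\beta_j}=0\Big\};$$ - put $\mathbf s^J_v=\sum_{j\in J}b^J_{vj}x^{\gamma_j}\tilde{\mathbf e}_j\in A^t$, where $\tilde{\mathbf e}_1,\dots,\tilde{\mathbf e}_t$ is the canonical basis of $A^t$. Then each $\mathbf s^J_v$ is a homogeneous syzygy of $\mathrm{Syz}(L)$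 of degree $\mathbf X_J$. Moreover, the set of all such $\mathbf s^J_v$ (over all such saturated $J$ and $1\le v\le r_J$) generates $\mathrm{Syz}(L)$ as a left $A$-module.
   Context: Let $R\subseteq A$ be rings. $A$ is a $\sigma$-PBW extension of $R$, written $A=\sigma(R)\langle x_1,\dots,x_n\rangle$, if there are $x_1,\dots,x_n\in A\setminus R$ such that: (i) $A$ is a free left $R$-module with basis $\mathrm{Mon}(A)=\{x^\alpha=x_1^{\alpha_1}\cdots x_n^{\alpha_n}:\alpha\in\mathbb N^n\}$, with $x^0=1$; (ii) for every $i$ and every $r\in R\setminus\{0\}$ there is $c_{i,r}\in R\setminus\{0\}$ with $x_ir-c_{i,r}x_i\in R$; (iii) for all $i,j$ there is $c_{i,j}\in R\setminus\{0\}$ with $x_jx_i-c_{i,j}x_ix_j\in R+Rx_1+\dots+Rx_n$. There are injective ring endomorphisms $\sigma_i$ of $R$ with $x_ir=\sigma_i(r)x_i+\delta_i(r)$, where $\delta_i$ are $\sigma_i$-derivations. Write $\sigma^\alpha=\sigma_1^{\alpha_1}\circ\cdots\circ\sigma_n^{\alpha_n}$. For $\alpha,\beta$ there are unique $c_{\alpha,\beta}\in R$ and $p_{\alpha,\beta}\in A$ with $x^\alpha x^\beta=c_{\alpha,\beta}x^{\alpha+\beta}+p_{\alpha,\beta}$, where $p_{\alpha,\beta}=0$ or $\deg p_{\alpha,\beta}<|\alpha+\beta|$. $A$ is quasi-commutative if $x_ir=c_{i,r}x_i$ and $x_jx_i=c_{i,j}x_ix_j$ exactly (then $p_{\alpha,\beta}=0$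 and $x^\alpha r=\sigma^\alpha(r)x^\alpha$). $A$ is bijective if each $\sigma_i$ is bijective and $c_{i,j}$ is invertible for $i<j$ (then all $c_{\alpha,\beta}$ are invertible). $\mathrm{Mon}(A)$ carries a monomial order (a total order compatible with multiplication via leading monomials, with $x^\alpha\succeq1$, degree compatible); $lm$ denotes leading monomial, $lm(x^\alpha x^\beta)=x^{\alpha+\beta}$. Monomials of $A^m$ are $x^\alpha\mathbf e_i$, with $\exp(x^\alpha\mathbf e_i)=\alpha$. The monomial $x^\alpha\mathbf e_i$ divides $x^\beta\mathbf e_j$ iff $i=j$ and $\beta_k\ge\alpha_k$ for all $k$. For $J\subseteq\{1,\dots,t\}$, $\mathbf X_J=\mathrm{lcm}\{\mathbf X_j:j\in J\}$, where the lcm of $x^\alpha\mathbf e_i$ and $x^\beta\mathbf e_j$ is $\mathbf 0$ if $i\neq j$, and $x^\gamma\mathbf e_i$ with $\gamma_k=\max(\alpha_k,\beta_k)$ if $i=j$. $J$ is saturated w.r.t. $\{\mathbf X_1,\dots,\mathbf X_t\}$ if for every $j\in\{1,\dots,t\}$, $\mathbf X_j\mid\mathbf X_J$ implies $j\in J$. A term of $A$ is $cx^\alpha$ with $c\in R$. A syzygy $\mathbf h=(h_1,\dots,h_t)^T\in\mathrm{Syz}(L)$ is homogeneous of degree $\mathbf X=X\mathbf e_i$ if each $h_j$ is a term and, for each $j$, either $h_j=0$ or $lm(lm(h_j)\mathbf X_j)=\mathbf X$. *)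

From HB Require Import structures.
From mathcomp Require Import all_boot all_order all_algebra.
Set Implicit Arguments. Unset Strict Implicit. Unset Printing Implicit Defensive.
Import GRing.Theory.
Local Open Scope ring_scope.

Definition exps (n : nat) := {ffun 'I_n -> nat}.
Definition expadd n (a b : exps n) : exps n := [ffun k => (a k + b k)%N].
Definition expmax n (a b : exps n) : exps n := [ffun k => maxn (a k) (b k)].
Definition expsub n (a b : exps n) : exps n := [ffun k => (a k - b k)%N].

Definition mon (A : nzRingType) n (x : 'I_n -> A) (a : exps n) : A :=
  \prod_(i < n) x i ^+ a i.

Definition sigma_pow (R : Type) n (sigma : 'I_n -> R -> R) (a : exps n) (r : R) : R :=
  foldr (fun i s => iter (a i) (sigma i) s) r (enum 'I_n).

Definition left_ideal (R : nzRingType) (I : R -> Prop) : Prop :=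
  I 0 /\ (forall a b, I a -> I b -> I (a + b)) /\ (forall r a, I a -> I (r * a)).
Definition left_noetherian (R : nzRingType) : Prop :=
  forall I : R -> Prop, left_ideal I ->
    exists s : seq R, (forall a, a \in s -> I a) /\
      (forall a, I a -> exists coef : 'I_(size s) -> R,
          a = \sum_(v < size s) coef v * nth 0 s v).

Definition invertible (R : nzRingType) (u : R) : Prop :=
  exists w, w * u = 1 /\ u * w = 1.

(* A (with R embedded by the injective ring morphism iota) is a quasi-commutative
   bijective sigma-PBW extension sigma(R)<x_1,...,x_n>, where
   sigma i r = c_{i,r}  (x_i r = c_{i,r} x_i),
   cij i j   = c_{i,j}  (x_j x_i = c_{i,j} x_i x_j),
   cab a b   = c_{alpha,beta} (x^alpha x^beta = c_{alpha,beta} x^{alpha+beta}). *)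
Definition qc_bij_sigma_PBW (R A : nzRingType) (iota : {rmorphism R -> A}) (n : nat)
  (x : 'I_n -> A) (sigma : 'I_n -> R -> R) (cij : 'I_n -> 'I_n -> R)
  (cab : exps n -> exps n -> R) : Prop :=
  injective iota /\
      (forall i, forall r, x i <> iota r) /\
      (forall a : A, exists s : seq (R * exps n),
          a = \sum_(p <- s) iota p.1 * mon x p.2) /\
      (forall (s : seq (exps n)) (f : exps n -> R), uniq s ->
          \sum_(al <- s) iota (f al) * mon x al = 0 ->
          forall al, al \in s -> f al = 0) /\
      (forall i r, x i * iota r = iota (sigma i r) * x i) /\
      (forall i r, r != 0 -> sigma i r != 0) /\
      (forall i j, x j * x i = iota (cij i j) * x i * x j) /\
      (forall i j, cij i j != 0) /\
      (forall i, bijective (sigma i)) /\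
      (forall i j : 'I_n, (i < j)%N -> invertible (cij i j)) /\
      (* the constants c_{alpha,beta} (here p_{alpha,beta} = 0) *)
      (forall a b, mon x a * mon x b = iota (cab a b) * mon x (expadd a b)).

(* Monomials of A^m: x^alpha e_i is encoded as the pair (alpha, i).
   The zero vector (lcm of monomials with different components) is None. *)
Definition mlcm n m (X Y : option (exps n * 'I_m)) : option (exps n * 'I_m) :=
  match X, Y with
  | Some (a, i), Some (b, j) => if i == j then Some (expmax a b, i) else None
  | _, _ => None
  end.

Definition mdivides n m (X Y : exps n * 'I_m) : bool :=
  (X.2 == Y.2) && [forall k, (X.1 k <= Y.1 k)%N].

Section Monomials.
Variables (n m t : nat) (beta : 'I_t -> exps n) (idx : 'I_t -> 'I_m).

Definition XJ (J : {set 'I_t}) : option (exps n * 'I_m) :=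
  match enum J with
  | [::] => None
  | j :: js => foldl (fun acc k => mlcm acc (Some (beta k, idx k))) (Some (beta j, idx j)) js
  end.

(* J saturated: X_j | X_J implies j in J  (only used when X_J <> 0) *)
Definition saturated (J : {set 'I_t}) : bool :=
  match XJ J with
  | Some Y => [forall j, mdivides (beta j, idx j) Y ==> (j \in J)]
  | None => true
  end.

Definition eligible (J : {set 'I_t}) : bool :=
  [&& J != set0, saturated J & XJ J != None].

Definition expXJ (J : {set 'I_t}) : exps n :=
  match XJ J with Some Y => Y.1 | None => [ffun => 0%N] end.

Definition gam (J : {set 'I_t}) (j : 'I_t) : exps n := expsub (expXJ J) (beta j).
End Monomials.

Section Syz.
Variables (R A : nzRingType) (iota : {rmorphism R -> A}) (n m t : nat)
  (x : 'I_n -> A) (c : 'I_t -> R) (beta : 'I_t -> exps n) (idx : 'I_t -> 'I_m).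

Definition inSyz (h : 'I_t -> A) : Prop :=
  forall k : 'I_m,
    \sum_(j < t) h j * (if idx j == k then iota (c j) * mon x (beta j) else 0) = 0.

Definition homogeneous (h : 'I_t -> A) (X : exps n * 'I_m) : Prop :=
  forall j, exists (r : R) (al : exps n), h j = iota r * mon x al /\
    (h j = 0 \/ (expadd al (beta j) = X.1 /\ idx j = X.2)).
End Syz.

From Pilot Require Import Defs.
From HB Require Import structures.
From mathcomp Require Import all_boot all_order all_algebra.
Set Implicit Arguments. Unset Strict Implicit. Unset Printing Implicit Defensive.
Import GRing.Theory.
Local Open Scope ring_scope.

(* In a quasi-commutative bijective extension each monomial [x^a] normalises
   [R] through the automorphism [sigma^a], and every constant [c_(a,b)] is a
   unit (induction on [b], the [c_(i,j)] being units).  Write a syzygy [h] in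
   the monomial basis: the relation [sum_j h_j c_j X_j = 0] splits into one
   relation for each monomial [x^X e_k] of [A^m].  The indices contributing to
   it form the saturated set [J] of all [j] with [X_j | x^X e_k]; with
   [d = X - exp(X_J)], the corresponding homogeneous piece
   [sum_(j in J) r_j x^(X - beta_j) e_j] of [h] equals
   [x^d * sum_(j in J) f_j x^(gamma_j) e_j], where [f_j] is [r_j] untwisted by
   [sigma^d] and the unit [c_(d,gamma_j)].  The cocycle identities for [c]
   turn the relation for [r] into [sum_j f_j sigma^(gamma_j)(c_j)
   c_(gamma_j,beta_j) = 0], so each piece is an [A]-combination of the
   [s^J_v]. *)

Lemma index_enumE (T : finType) : index_enum T = enum T.
Proof. by rewrite enumT /index_enum unlock. Qed.

Lemma invertibleM (R : nzRingType) (u v : R) :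
  invertible u -> invertible v -> invertible (u * v).
Proof.
move=> [u' [u'u uu']] [v' [v'v vv']]; exists (v' * u'); split.
  by rewrite mulrA -(mulrA v') u'u mulr1 v'v.
by rewrite mulrA -(mulrA u) vv' mulr1 uu'.
Qed.

Lemma invertible1 (R : nzRingType) : invertible (1 : R).
Proof. by exists 1; rewrite mulr1. Qed.

Lemma invertible_mulIr (R : nzRingType) (u r : R) : invertible u -> r * u = 0 -> r = 0.
Proof. by move=> [u' [_ uu']] ru0; rewrite -[r]mulr1 -uu' mulrA ru0 mul0r. Qed.

Lemma sum_seq_pred1 (V : nmodType) (I : eqType) (s : seq I) (i : I) (F : I -> V) :
  uniq s -> \sum_(k <- s | k == i) F k = if i \in s then F i else 0.
Proof.
move=> s_uniq; rewrite (eq_bigr (fun => F i)) => [|k /eqP -> //].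
by rewrite big_const_seq iter_addr_0 count_uniq_mem //; case: (i \in s).
Qed.

Lemma sum_partition_seq (V : nmodType) (I K : eqType) (s : seq I) (S : seq K)
    (key : I -> K) (F : I -> V) :
  uniq S -> {in s, forall i, key i \in S} ->
  \sum_(i <- s) F i = \sum_(k <- S) \sum_(i <- s | key i == k) F i.
Proof.
move=> S_uniq keyS; under [RHS]eq_bigr do rewrite big_mkcond /=.
rewrite exchange_big /= big_seq [RHS]big_seq; apply: eq_bigr => i i_s.
rewrite -big_mkcond /= (eq_bigl (fun k => k == key i)) => [|k]; last by rewrite eq_sym.
by rewrite sum_seq_pred1 // keyS.
Qed.

Section Exponents.
Variable n : nat.
Implicit Types a b g : exps n.

Definition exp0 : exps n := [ffun => 0%N].
Definition expe (i : 'I_n) : exps n := [ffun k => nat_of_bool (k == i)].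
Definition exp_le a b : bool := [forall k, (a k <= b k)%N].

Lemma exp_leP a b : reflect (forall k, (a k <= b k)%N) (exp_le a b).
Proof. exact: forallP. Qed.

Lemma expaddA a b g : expadd (expadd a b) g = expadd a (expadd b g).
Proof. by apply/ffunP => k; rewrite !ffunE addnA. Qed.

Lemma expadd0 a : expadd a exp0 = a.
Proof. by apply/ffunP => k; rewrite !ffunE addn0. Qed.

Lemma expsubK a b : exp_le b a -> expadd (expsub a b) b = a.
Proof. by move=> /exp_leP ba; apply/ffunP => k; rewrite !ffunE subnK. Qed.

Lemma expaddK a b : expsub (expadd a b) b = a.
Proof. by apply/ffunP => k; rewrite !ffunE addnK. Qed.

Lemma exp_le_addl a b : exp_le b (expadd a b).
Proof. by apply/exp_leP => k; rewrite ffunE leq_addl. Qed.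

Lemma exp_le_trans b a g : exp_le a b -> exp_le b g -> exp_le a g.
Proof. by move=> /exp_leP ab /exp_leP bg; apply/exp_leP => k; apply: leq_trans (ab k) (bg k). Qed.

Lemma exps_ind (P : exps n -> Prop) :
  P exp0 -> (forall b i, P b -> P (expadd b (expe i))) -> forall b, P b.
Proof.
move=> P0 PS b; have [N] := ubnP (\sum_k b k); elim: N b => // N IH b.
have [/existsP [k bk] | /existsPn b0] := boolP [exists k, b k != 0%N]; last first.
  by have -> : b = exp0 by apply/ffunP => k; rewrite ffunE; apply/eqP/negPn.
have le_ek : exp_le (expe k) b.
  by apply/exp_leP => l; rewrite ffunE; case: eqP => [->|]; rewrite ?lt0n.
rewrite -(expsubK le_ek) ltnS => sum_b; apply/PS/IH; apply: leq_trans sum_b.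
under [X in (_ < X)%N]eq_bigr do rewrite ffunE.
by rewrite big_split /= -addn1 leq_add2l (bigD1 k) //= ffunE eqxx.
Qed.

Lemma sum_shift (V : nmodType) b (S T : seq (exps n)) (H : exps n -> V) :
  uniq S -> uniq T -> {in S, forall a, expadd a b \in T} -> (forall a, a \notin S -> H a = 0) ->
  \sum_(a <- S) H a = \sum_(X <- T) (if exp_le b X then H (expsub X b) else 0).
Proof.
move=> S_uniq T_uniq ST H0; rewrite (sum_partition_seq _ T_uniq ST); apply: eq_bigr => X _.
case: ifP => bX; last by rewrite big1 // => a /eqP aX; rewrite -aX exp_le_addl in bX.
rewrite (eq_bigl (fun a => a == expsub X b)) => [|a]; last first.
  by apply/eqP/eqP => [<-|->]; rewrite ?expaddK ?expsubK.
by rewrite sum_seq_pred1 //; case: ifP => // /negbT /H0.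
Qed.

End Exponents.
Arguments exp0 {n}.

Section LeastCommonMultiple.
Variables (n m t : nat) (beta : 'I_t -> exps n) (idx : 'I_t -> 'I_m).
Let lcm_step acc k := mlcm acc (Some (beta k, idx k)).

Lemma foldl_mlcm_None l : foldl lcm_step None l = None.
Proof. by elim: l. Qed.

Lemma foldl_mlcm_ub l b0 i0 Y i : foldl lcm_step (Some (b0, i0)) l = Some (Y, i) ->
  [/\ i = i0, exp_le b0 Y & forall k, k \in l -> idx k = i0 /\ exp_le (beta k) Y].
Proof.
elim: l b0 => [|k l IH] b0 /=; first by case=> -> ->; split=> //; apply/exp_leP.
rewrite /lcm_step /=; case: eqP => [ik|_]; last by rewrite foldl_mlcm_None.
move/IH => [-> /exp_leP maxY ub]; split=> //.
  by apply/exp_leP => q; apply: leq_trans (maxY q); rewrite ffunE leq_maxl.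
move=> k'; rewrite inE => /orP [/eqP ->|/ub //]; split=> //.
by apply/exp_leP => q; apply: leq_trans (maxY q); rewrite ffunE leq_maxr.
Qed.

Lemma foldl_mlcm_least l b0 i0 X :
  exp_le b0 X -> (forall k, k \in l -> idx k = i0 /\ exp_le (beta k) X) ->
  exists2 Y, foldl lcm_step (Some (b0, i0)) l = Some (Y, i0) & exp_le Y X.
Proof.
elim: l b0 => [|k l IH] b0 b0X lX /=; first by exists b0.
have [-> kX] := lX k (mem_head _ _).
rewrite /lcm_step /= eqxx; apply: IH => [|k' k'l]; last by apply: lX; rewrite inE k'l orbT.
by apply/exp_leP => q; rewrite ffunE geq_max (exp_leP _ _ b0X) (exp_leP _ _ kX).
Qed.

Lemma XJ_ub J Y : XJ beta idx J = Some Y ->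
  forall j, j \in J -> idx j = Y.2 /\ exp_le (beta j) Y.1.
Proof.
rewrite /XJ; case E: (enum J) => [|j0 js] //; case: Y => Y i XJY j.
rewrite -mem_enum E inE; have [-> j0Y ub] := foldl_mlcm_ub XJY.
by case/orP => [/eqP ->|/ub].
Qed.

Lemma XJ_least J k X : J != set0 ->
  (forall j, j \in J -> idx j = k /\ exp_le (beta j) X) ->
  exists2 Y, XJ beta idx J = Some (Y, k) & exp_le Y X.
Proof.
move=> /set0Pn [j jJ] JX; rewrite /XJ; case E: (enum J) => [|j0 js].
  by move: jJ; rewrite -mem_enum E.
have j0J : j0 \in J by rewrite -mem_enum E mem_head.
have [j0k j0X] := JX j0 j0J; rewrite j0k.
by apply: foldl_mlcm_least => // k' k'js; apply: JX; rewrite -mem_enum E inE k'js orbT.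
Qed.

Definition divisor_set X k : {set 'I_t} := [set j | (idx j == k) && exp_le (beta j) X].

Lemma divisor_set_eligible X k : divisor_set X k != set0 ->
  eligible beta idx (divisor_set X k) /\
  exists2 Y, XJ beta idx (divisor_set X k) = Some (Y, k) & exp_le Y X.
Proof.
move=> D0; have DX j : j \in divisor_set X k -> idx j = k /\ exp_le (beta j) X.
  by rewrite inE => /andP [/eqP -> ->].
have [Y XJ_Y YX] := XJ_least D0 DX.
split; last by exists Y.
apply/and3P; split=> //; last by rewrite XJ_Y.
rewrite /saturated XJ_Y; apply/forallP => j; apply/implyP => /andP [/= /eqP jk jY].
by rewrite inE jk eqxx (exp_le_trans _ YX) //; apply/exp_leP/forallP.
Qed.

End LeastCommonMultiple.

Section QuasiCommutativeBijectivePBW.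
Variables (R A : nzRingType) (iota : {rmorphism R -> A}) (n : nat)
  (x : 'I_n -> A) (sigma : 'I_n -> R -> R) (cij : 'I_n -> 'I_n -> R)
  (cab : exps n -> exps n -> R).
Hypothesis HA : qc_bij_sigma_PBW iota x sigma cij cab.

Local Notation mon := (mon x).
Local Notation sp := (sigma_pow sigma).
Implicit Types (a b d g : exps n) (r u : R) (i : 'I_n).

Lemma mon_basis (z : A) : exists s : seq (R * exps n), z = \sum_(p <- s) iota p.1 * mon p.2.
Proof. by case: HA => [_ [_ [H _]]]; apply: H. Qed.

Lemma mon_free (s : seq (exps n)) (f : exps n -> R) : uniq s ->
  \sum_(a <- s) iota (f a) * mon a = 0 -> forall a, a \in s -> f a = 0.
Proof. by case: HA => [_ [_ [_ [H _]]]]; apply: H. Qed.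

Lemma x_iota i r : x i * iota r = iota (sigma i r) * x i.
Proof. by case: HA => [_ [_ [_ [_ [H _]]]]]. Qed.

Lemma x_swap i (j : 'I_n) : x j * x i = iota (cij i j) * x i * x j.
Proof. by case: HA => [_ [_ [_ [_ [_ [_ [H _]]]]]]]. Qed.

Lemma sigma_bij i : bijective (sigma i).
Proof. by case: HA => [_ [_ [_ [_ [_ [_ [_ [_ [H _]]]]]]]]]. Qed.

Lemma cij_unit i (j : 'I_n) : (i < j)%N -> invertible (cij i j).
Proof. by case: HA => [_ [_ [_ [_ [_ [_ [_ [_ [_ [H _]]]]]]]]]]; apply: H. Qed.

Lemma mon_mul a b : mon a * mon b = iota (cab a b) * mon (expadd a b).
Proof. by case: HA => [_ [_ [_ [_ [_ [_ [_ [_ [_ [_ H]]]]]]]]]]. Qed.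

Lemma iota_mon_eq0 r a : iota r * mon a = 0 -> r = 0.
Proof.
move=> ra0; apply: (@mon_free [:: a] (fun _ => r)) (mem_head _ _) => //.
by rewrite big_seq1.
Qed.

Lemma iota_mon_inj r r' a : iota r * mon a = iota r' * mon a -> r = r'.
Proof.
move=> e; apply/eqP; rewrite -subr_eq0; apply/eqP/(@iota_mon_eq0 _ a).
by rewrite rmorphB mulrBl e subrr.
Qed.

Lemma mon0 : mon exp0 = 1.
Proof. by rewrite /Defs.mon big1 // => k _; rewrite ffunE expr0. Qed.

Lemma mon_expe i : mon (expe i) = x i.
Proof.
rewrite /Defs.mon (eq_bigr (fun k => if k == i then x k else 1)).
  by rewrite -big_mkcond big_pred1_eq.
by move=> k _; rewrite ffunE; case: eqP.
Qed.

Lemma exprx_iota i p r : x i ^+ p * iota r = iota (iter p (sigma i) r) * x i ^+ p.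
Proof.
elim: p r => [|p IH] r; first by rewrite !expr0 mul1r mulr1.
by rewrite exprS -mulrA IH mulrA x_iota -mulrA -exprS.
Qed.

Lemma mon_iota a r : mon a * iota r = iota (sp a r) * mon a.
Proof.
rewrite /Defs.mon /sigma_pow index_enumE.
elim: (enum 'I_n) r => [|i l IH] r /=; first by rewrite !big_nil mul1r mulr1.
by rewrite !big_cons -mulrA IH mulrA exprx_iota mulrA.
Qed.

Lemma sigma_powD a : {morph sp a : r r' / r + r'}.
Proof.
move=> r r'; apply: (@iota_mon_inj _ _ a).
by rewrite -mon_iota !rmorphD mulrDr mulrDl !mon_iota.
Qed.

Lemma sigma_pow0 a : sp a 0 = 0.
Proof. by apply: (@iota_mon_inj _ _ a); rewrite -mon_iota !rmorph0 mulr0 mul0r. Qed.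

Lemma sigma_powM a : {morph sp a : r r' / r * r'}.
Proof.
move=> r r'; apply: (@iota_mon_inj _ _ a).
by rewrite -mon_iota !rmorphM mulrA mon_iota -mulrA mon_iota mulrA.
Qed.

Lemma sigma_pow1 a : sp a 1 = 1.
Proof. by apply: (@iota_mon_inj _ _ a); rewrite -mon_iota !rmorph1 mulr1 mul1r. Qed.

Lemma sigma_pow_sum a (I : Type) (s : seq I) (P : pred I) (F : I -> R) :
  sp a (\sum_(k <- s | P k) F k) = \sum_(k <- s | P k) sp a (F k).
Proof. exact: (big_morph _ (sigma_powD a) (sigma_pow0 a)). Qed.

Lemma sigma_pow_unit a u : invertible u -> invertible (sp a u).
Proof. by move=> [u' [u'u uu']]; exists (sp a u'); rewrite -!sigma_powM u'u uu' sigma_pow1. Qed.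

Lemma sigma_pow_bij a : bijective (sp a).
Proof.
rewrite /sigma_pow; elim: (enum 'I_n) => [|i l IH] /=; first by exists id.
have iter_bij p : bijective (iter p (sigma i)).
  elim: p => [|p IHp]; first by exists id.
  exact: eq_bij (bij_comp (sigma_bij i) IHp) _ (frefl _).
exact: eq_bij (bij_comp (iter_bij _) IH) _ (frefl _).
Qed.

Lemma iter_sigma_unit i p u : invertible u -> invertible (iter p (sigma i) u).
Proof.
have sigma_sp r : sigma i r = sp (expe i) r.
  by apply: (@iota_mon_inj _ _ (expe i)); rewrite -mon_iota mon_expe x_iota.
by elim: p => [|p IH] //= /IH; rewrite sigma_sp; apply: sigma_pow_unit.
Qed.

Lemma exprx_x_swap i (k : 'I_n) p : (i < k)%N ->
  exists2 u, invertible u & x k ^+ p * x i = iota u * x i * x k ^+ p.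
Proof.
move=> ik; elim: p => [|p [u u_unit IH]].
  by exists 1; [exact: invertible1 | rewrite expr0 mul1r mulr1 rmorph1 mul1r].
exists (sigma k u * cij i k).
  exact: invertibleM (iter_sigma_unit k 1 u_unit) (cij_unit ik).
rewrite exprS -mulrA IH !mulrA x_iota -(mulrA _ (x k)) x_swap rmorphM !mulrA.
by rewrite -!mulrA -exprS.
Qed.

Lemma prod_exprx_x_swap (l : seq 'I_n) a i : all (fun k : 'I_n => i < k)%N l ->
  exists2 u, invertible u &
    (\prod_(k <- l) x k ^+ a k) * x i = iota u * x i * \prod_(k <- l) x k ^+ a k.
Proof.
elim: l => [|k l IH] /=.
  by exists 1; [exact: invertible1 | rewrite !big_nil rmorph1 !mul1r mulr1].
case/andP=> ik /IH [u u_unit IHu]; have [v v_unit kv] := exprx_x_swap (a k) ik.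
exists (iter (a k) (sigma k) u * v).
  exact: invertibleM (iter_sigma_unit k (a k) u_unit) v_unit.
by rewrite !big_cons -mulrA IHu !mulrA exprx_iota -(mulrA _ (x k ^+ a k)) kv rmorphM !mulrA.
Qed.

Lemma prod_exprx_mulx (l : seq 'I_n) a i :
  sorted (fun k k' : 'I_n => k < k')%N l -> i \in l ->
  exists2 u, invertible u &
    (\prod_(k <- l) x k ^+ a k) * x i = iota u * \prod_(k <- l) x k ^+ expadd a (expe i) k.
Proof.
have ord_lt_trans : transitive (fun k k' : 'I_n => k < k')%N.
  by move=> k k' k''; apply: ltn_trans.
elim: l => [|k l IH] //= l_sorted; have l_gt := order_path_min ord_lt_trans l_sorted.
have eq_ai k' : k' != i -> expadd a (expe i) k' = a k'.
  by move=> /negbTE k'i; rewrite !ffunE k'i addn0.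
rewrite !big_cons inE; have [ki _ | ki il] := eqVneq k i.
  subst k; have [u u_unit lx] := prod_exprx_x_swap a l_gt.
  exists (iter (a i) (sigma i) u); first exact: iter_sigma_unit.
  rewrite -mulrA lx !mulrA exprx_iota -(mulrA _ (x i ^+ _)) -exprSr !ffunE eqxx addn1.
  congr (_ * _); apply: eq_big_seq => k' k'l; rewrite eq_ai //.
  by apply: contraTneq (allP l_gt k' k'l) => ->; rewrite ltnn.
have [u u_unit lx] := IH (path_sorted l_sorted) il.
exists (iter (a k) (sigma k) u); first exact: iter_sigma_unit.
by rewrite -mulrA lx mulrA exprx_iota eq_ai // mulrA.
Qed.

Lemma mon_mulx a i : exists2 u, invertible u & mon a * x i = iota u * mon (expadd a (expe i)).
Proof.
apply: prod_exprx_mulx; last by rewrite mem_index_enum.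
by rewrite index_enumE; move: (iota_ltn_sorted 0 n); rewrite -val_enum_ord sorted_map.
Qed.

Lemma cab_unit a b : invertible (cab a b).
Proof.
elim/exps_ind: b => [|b i cab_ab].
  have : iota (cab a exp0) * mon (expadd a exp0) = iota 1 * mon (expadd a exp0).
    by rewrite -mon_mul mon0 mulr1 expadd0 rmorph1 mul1r.
  by move/iota_mon_inj ->; apply: invertible1.
have [u [u' [u'u uu']] bx] := mon_mulx b i.
have [v v_unit abx] := mon_mulx (expadd a b) i.
have mon_bx : mon (expadd b (expe i)) = iota u' * mon b * x i.
  by rewrite -mulrA bx mulrA -rmorphM u'u rmorph1 mul1r.
suff -> : cab a (expadd b (expe i)) = sp a u' * cab a b * v.
  by apply: invertibleM v_unit; apply: invertibleM cab_ab; apply: sigma_pow_unit; exists u.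
apply: (@iota_mon_inj _ _ (expadd a (expadd b (expe i)))).
rewrite -mon_mul mon_bx !mulrA mon_iota -(mulrA _ (mon a)) mon_mul !mulrA -(mulrA _ (mon _)).
by rewrite abx expaddA !rmorphM !mulrA.
Qed.

Lemma cab_sigma_pow d g r : cab d g * sp (expadd d g) r = sp d (sp g r) * cab d g.
Proof.
apply: (@iota_mon_inj _ _ (expadd d g)).
rewrite rmorphM -mulrA -mon_iota mulrA -mon_mul -mulrA mon_iota (mulrA (mon d)) mon_iota.
by rewrite -mulrA mon_mul !rmorphM mulrA.
Qed.

Lemma cab_cocycle d g b : cab d g * cab (expadd d g) b = sp d (cab g b) * cab d (expadd g b).
Proof.
apply: (@iota_mon_inj _ _ (expadd (expadd d g) b)).
rewrite rmorphM -mulrA -mon_mul mulrA -mon_mul -mulrA mon_mul mulrA mon_iota -mulrA mon_mul.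
by rewrite mulrA -rmorphM expaddA.
Qed.

Lemma iota_mon_mul r g r' b :
  iota r * mon g * (iota r' * mon b) = iota (r * (sp g r' * cab g b)) * mon (expadd g b).
Proof. by rewrite -mulrA (mulrA (mon g)) mon_iota -mulrA mon_mul !rmorphM !mulrA. Qed.

Lemma sigma_pow_eq0 a r : sp a r = 0 -> r = 0.
Proof.
have [spi spK _] := sigma_pow_bij a.
by move=> ar0; apply: (can_inj spK); rewrite ar0 sigma_pow0.
Qed.

Lemma sigma_pow_cab_solve d g r : exists f, sp d f * cab d g = r.
Proof.
have [w [wc _]] := cab_unit d g; have [spi _ spiK] := sigma_pow_bij d.
by exists (spi (r * w)); rewrite spiK -mulrA wc mulr1.
Qed.

Lemma common_support (T : finType) (h : T -> A) :
  exists S : seq (exps n), exists f : T -> exps n -> R,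
    [/\ uniq S, forall y a, a \notin S -> f y a = 0
      & forall y, h y = \sum_(a <- S) iota (f y a) * mon a].
Proof.
have [ss hss] := fin_all_exists (fun y => mon_basis (h y)).
pose S := undup (flatten [seq [seq p.2 | p <- ss y] | y <- enum T]).
have inS y p : p \in ss y -> p.2 \in S.
  move=> p_ss; rewrite mem_undup; apply/flattenP; exists [seq p.2 | p <- ss y].
    by apply/mapP; exists y; rewrite ?mem_enum.
  exact: map_f.
exists S, (fun y a => \sum_(p <- ss y | p.2 == a) p.1).
split=> [||y]; first exact: undup_uniq.
  move=> y a aS; apply: big1_seq => p /andP [/eqP pa p_ss].
  by move: (inS y p p_ss); rewrite pa (negbTE aS).
rewrite hss (sum_partition_seq _ (undup_uniq _) (inS y)); apply: eq_bigr => a _.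
by rewrite rmorph_sum mulr_suml; apply: eq_bigr => p /eqP ->.
Qed.

Section Syzygies.
Variables (m t : nat) (c : 'I_t -> R) (beta : 'I_t -> exps n) (idx : 'I_t -> 'I_m).
Local Notation gam := (gam beta idx).
Implicit Types (j : 'I_t) (k : 'I_m).

(* [x^g * (c_j X_j) = weight g j x^(g + beta_j) e_(idx j)]. *)
Definition weight g j : R := sp g (c j) * cab g (beta j).

Definition syz_term (J : {set 'I_t}) (f : 'I_t -> R) j : A :=
  if j \in J then iota (f j) * mon (gam J j) else 0.

Lemma weight_shift d g j :
  cab d g * weight (expadd d g) j = sp d (weight g j) * cab d (expadd g (beta j)).
Proof. by rewrite /weight mulrA cab_sigma_pow -mulrA cab_cocycle sigma_powM mulrA. Qed.

Lemma gam_addK J Y j : XJ beta idx J = Some Y -> j \in J -> expadd (gam J j) (beta j) = Y.1.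
Proof. by rewrite /Defs.gam /expXJ => XJ_Y /(XJ_ub XJ_Y) [_]; rewrite XJ_Y; apply: expsubK. Qed.

Lemma syz_term_syz J Y f : XJ beta idx J = Some Y ->
  \sum_(j in J) f j * weight (gam J j) j = 0 -> inSyz iota x c beta idx (syz_term J f).
Proof.
move=> XJ_Y fw0 k; rewrite (eq_bigr (fun j => if (Y.2 == k) && (j \in J) then
    iota (f j * weight (gam J j) j) * mon Y.1 else 0)) => [|j _].
  rewrite -big_mkcond; case: eqP => _ /=; last by rewrite big_pred0.
  by rewrite -mulr_suml -rmorph_sum fw0 rmorph0 mul0r.
rewrite /syz_term; case: (boolP (j \in J)) => [jJ|]; last by rewrite andbF mul0r.
have [-> _] := XJ_ub XJ_Y jJ; rewrite andbT; case: eqP => _; last by rewrite mulr0.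
by rewrite iota_mon_mul (gam_addK XJ_Y jJ).
Qed.

Lemma syz_term_homogeneous J Y f : XJ beta idx J = Some Y ->
  homogeneous iota x beta idx (syz_term J f) Y.
Proof.
move=> XJ_Y j; rewrite /syz_term; case: ifP => jJ.
  exists (f j), (gam J j); split=> //; right.
  by split; [exact: gam_addK XJ_Y jJ | case: (XJ_ub XJ_Y jJ)].
by exists 0, Y.1; split; [rewrite rmorph0 mul0r | left].
Qed.

Section Span.
Variable B : {set 'I_t} -> seq {ffun 'I_t -> R}.
Hypothesis B_spans : forall J, eligible beta idx J ->
  forall f : 'I_t -> R, \sum_(j in J) f j * weight (gam J j) j = 0 ->
  exists a : 'I_(size (B J)) -> R, forall j, j \in J ->
    f j = \sum_(v < size (B J)) a v * nth [ffun => 0] (B J) v j.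

Definition in_span (h : 'I_t -> A) : Prop :=
  exists coef : {set 'I_t} -> nat -> A, forall j,
    h j = \sum_(J : {set 'I_t} | eligible beta idx J)
            \sum_(v < size (B J)) coef J v * syz_term J (nth [ffun => 0] (B J) v) j.

Lemma eq_in_span h h' : h =1 h' -> in_span h' -> in_span h.
Proof. by move=> hh' [coef h'_coef]; exists coef => j; rewrite hh'. Qed.

Lemma in_span0 : in_span (fun => 0).
Proof.
exists (fun _ _ => 0) => j; rewrite big1 // => J _.
by rewrite big1 // => v _; rewrite mul0r.
Qed.

Lemma in_span_sum (I : eqType) (s : seq I) (F : I -> 'I_t -> A) :
  {in s, forall y, in_span (F y)} -> in_span (fun j => \sum_(y <- s) F y j).
Proof.
elim: s => [_ | y s IH Fs]; first by apply: eq_in_span in_span0 => j; rewrite big_nil.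
have [coef Fi] := Fs y (mem_head _ _).
have [coef' Fs'] := IH (fun y' y's => Fs y' (mem_behead (s := y :: s) y's)).
exists (fun J v => coef J v + coef' J v) => j; rewrite big_cons Fi Fs' -big_split /=.
by apply: eq_bigr => J _; rewrite -big_split /=; apply: eq_bigr => v _; rewrite mulrDl.
Qed.

Lemma in_span_mull (z : A) h : in_span h -> in_span (fun j => z * h j).
Proof.
move=> [coef h_coef]; exists (fun J v => z * coef J v) => j.
rewrite h_coef mulr_sumr; apply: eq_bigr => J _.
by rewrite mulr_sumr; apply: eq_bigr => v _; rewrite mulrA.
Qed.

Lemma in_span_syz_term J f : eligible beta idx J ->
  \sum_(j in J) f j * weight (gam J j) j = 0 -> in_span (syz_term J f).
Proof.
move=> elJ /(B_spans elJ) [a f_a].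
exists (fun J' v => if J' != J then 0 else if insub v is Some v' then iota (a v') else 0) => j.
rewrite (bigD1 J elJ) /= eqxx [X in _ + X]big1 ?addr0; last first.
  by move=> J' /andP [_ ->]; rewrite big1 // => v _; rewrite mul0r.
rewrite /syz_term; case: ifP => jJ; last by rewrite big1 // => v _; rewrite mulr0.
rewrite f_a // rmorph_sum mulr_suml; apply: eq_bigr => v _.
by rewrite valK rmorphM mulrA.
Qed.

Lemma in_span_divisor_component X k (r : 'I_t -> R) :
  \sum_(j in divisor_set beta idx X k) r j * weight (expsub X (beta j)) j = 0 ->
  in_span (fun j => if j \in divisor_set beta idx X k
                    then iota (r j) * mon (expsub X (beta j)) else 0).
Proof.
set D := divisor_set beta idx X k => rw0.
have [D0 | D_ne0] := eqVneq D set0.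
  by apply: eq_in_span in_span0 => j; rewrite D0 inE.
have [elD [Y XJ_Y /exp_leP YX]] := divisor_set_eligible D_ne0.
set d := expsub X Y.
have gamD j : j \in D -> expsub X (beta j) = expadd d (gam D j).
  move=> jD; have [_ /exp_leP bY] := XJ_ub XJ_Y jD.
  by apply/ffunP => q; rewrite /Defs.gam /expXJ XJ_Y !ffunE addnBA ?bY // subnK ?YX.
(* [f] is chosen so that [x^d * (f_j x^(gam_j)) = r_j x^(X - beta_j)]. *)
have [f Hf] := fin_all_exists (fun j => sigma_pow_cab_solve d (gam D j) (r j)).
apply: (@eq_in_span _ (fun j => mon d * syz_term D f j)) => [j|].
  rewrite /syz_term; case: ifP => [jD|_]; last by rewrite mulr0.
  by rewrite gamD // -Hf mulrA mon_iota -mulrA mon_mul rmorphM mulrA.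
apply: in_span_mull; apply: in_span_syz_term => //.
apply: (@sigma_pow_eq0 d); apply: (invertible_mulIr (cab_unit d Y)).
rewrite sigma_pow_sum mulr_suml -[RHS]rw0; apply: eq_bigr => j jD.
have /= := gam_addK XJ_Y jD => <-.
by rewrite sigma_powM -mulrA -weight_shift mulrA Hf -gamD.
Qed.

Lemma in_span_syz h : inSyz iota x c beta idx h -> in_span h.
Proof.
move=> h_syz; have [S [f [S_uniq f0 hS]]] := common_support h.
pose T := undup [seq expadd a (beta j) | a <- S, j <- enum 'I_t].
have T_uniq : uniq T := undup_uniq _.
have ST j : {in S, forall a, expadd a (beta j) \in T}.
  by move=> a aS; rewrite mem_undup; apply/allpairsP; exists (a, j); rewrite mem_enum.
pose piece X k j := if j \in divisor_set beta idx X k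
  then iota (f j (expsub X (beta j))) * mon (expsub X (beta j)) else 0.
have h_pieces j : h j = \sum_(X <- T) \sum_(k < m) piece X k j.
  rewrite hS (sum_shift S_uniq T_uniq (ST j)) => [|a /f0 ->]; last by rewrite rmorph0 mul0r.
  apply: eq_bigr => X _; rewrite (bigD1 (idx j)) //= big1 ?addr0 => [|k kj].
    by rewrite /piece inE eqxx.
  by rewrite /piece inE eq_sym (negbTE kj).
have expand j k : h j * (if idx j == k then iota (c j) * mon (beta j) else 0) =
    \sum_(X <- T) iota (if j \in divisor_set beta idx X k
      then f j (expsub X (beta j)) * weight (expsub X (beta j)) j else 0) * mon X.
  have [jk|jk] := eqVneq (idx j) k; last first.
    by rewrite mulr0 big1 // => X _; rewrite inE (negbTE jk) rmorph0 mul0r.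
  rewrite hS mulr_suml; under eq_bigr do rewrite iota_mon_mul.
  rewrite (sum_shift S_uniq T_uniq (ST j)) => [|a /f0 ->]; last by rewrite !mul0r rmorph0 mul0r.
  apply: eq_bigr => X _; rewrite inE jk eqxx /=; case: ifP => [bX|_]; last by rewrite rmorph0 mul0r.
  by rewrite expsubK.
have relation X k : X \in T -> \sum_(j in divisor_set beta idx X k)
    f j (expsub X (beta j)) * weight (expsub X (beta j)) j = 0.
  move=> XT; rewrite big_mkcond /=; apply: (mon_free (f := fun X => \sum_j
    (if j \in divisor_set beta idx X k then
       f j (expsub X (beta j)) * weight (expsub X (beta j)) j else 0)) T_uniq _ XT).
  rewrite -[RHS](h_syz k); under [RHS]eq_bigr do rewrite expand.
  by rewrite exchange_big /=; apply: eq_bigr => Y _; rewrite rmorph_sum mulr_suml.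
apply: (eq_in_span h_pieces); apply: in_span_sum => X XT; apply: in_span_sum => k _.
exact: in_span_divisor_component (relation X k XT).
Qed.

End Span.

End Syzygies.

End QuasiCommutativeBijectivePBW.

Theorem lemma38 (R A : nzRingType) (iota : {rmorphism R -> A}) (n : nat)
  (x : 'I_n -> A) (sigma : 'I_n -> R -> R) (cij : 'I_n -> 'I_n -> R)
  (cab : exps n -> exps n -> R)
  (HA : qc_bij_sigma_PBW iota x sigma cij cab)
  (HR : left_noetherian R)
  (m t : nat) (c : 'I_t -> R) (Hc : forall j, c j != 0)
  (beta : 'I_t -> exps n) (idx : 'I_t -> 'I_m)
  (B : {set 'I_t} -> seq {ffun 'I_t -> R})
  (HB : forall J, eligible beta idx J ->
     let w := fun j => sigma_pow sigma (gam beta idx J j) (c j)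
                        * cab (gam beta idx J j) (beta j) in
     (forall v : nat, (v < size (B J))%N ->
        \sum_(j in J) nth [ffun => 0] (B J) v j * w j = 0) /\
     (forall f : 'I_t -> R, \sum_(j in J) f j * w j = 0 ->
        exists a : 'I_(size (B J)) -> R, forall j, j \in J ->
          f j = \sum_(v < size (B J)) a v * nth [ffun => 0] (B J) v j)) :
  let s := fun (J : {set 'I_t}) (v : nat) (j : 'I_t) =>
     if j \in J then iota (nth [ffun => 0] (B J) v j) * mon x (gam beta idx J j) else 0 in
  (forall J Y, eligible beta idx J -> XJ beta idx J = Some Y ->
     forall v : nat, (v < size (B J))%N ->
       inSyz iota x c beta idx (s J v) /\ homogeneous iota x beta idx (s J v) Y) /\
  (forall h : 'I_t -> A, inSyz iota x c beta idx h ->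
     exists coef : {set 'I_t} -> nat -> A, forall j,
       h j = \sum_(J : {set 'I_t} | eligible beta idx J)
               \sum_(v < size (B J)) coef J v * s J v j).
Proof.
move=> s; split=> [J Y elJ XJ_Y v v_lt | h h_syz].
  exact: (conj (syz_term_syz HA XJ_Y ((HB J elJ).1 v v_lt)) (syz_term_homogeneous _ _ _ XJ_Y)).
exact: (in_span_syz HA (fun J elJ => (HB J elJ).2) h_syz).
Qed.
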